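(* Let $g>0$ and $\chi>0$ be constants, and let $h(t,x)>0$, $u(t,x)$ be smooth solutions of $$h_t+(hu)_x=0,\qquad (hu)_t+\Big(hu^2+g\frac{h^2}{2}-\chi\ddot\tau\Big)_x=0,$$ where $\tau=1/h$ and for any function $f(t,x)$, $\dot f=f_t+uf_x$ (so $\ddot\tau$ is the second such material derivative of $\tau$). Then, with $q=hu$, the energy conservation law $$\left(h\Big(\frac{u^2}{2}+g\frac{h}{2}+\frac{\chi\dot\tau^2}{2}\Big)\right)_t+\left(q\Big(\frac{u^2}{2}+g\frac{h}{2}+\frac{\chi\dot\tau^2}{2}\Big)+\Big(g\frac{h^2}{2}-\chi\ddot\tau\Big)u\right)_x=0$$ holds.
   Context: This is the ''simplified geometrical Green–Naghdi'' system for section-averaged depth $h$ and Favre-averaged velocity $u$ in a prismatic channel, with $\chi$ a positive geometric dispersion coefficient determined by the channel cross-section. *)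

From Stdlib Require Import Reals List.
From Coquelicot Require Import Coquelicot.
Open Scope R_scope.

Definition pt (f : R -> R -> R) : R -> R -> R :=
  fun t x => Derive (fun s => f s x) t.
Definition px (f : R -> R -> R) : R -> R -> R :=
  fun t x => Derive (fun y => f t y) x.

Fixpoint iter_partial (l : list bool) (f : R -> R -> R) : R -> R -> R :=
  match l with
  | nil => f
  | b :: l' => if b then pt (iter_partial l' f) else px (iter_partial l' f)
  end.

Definition smooth2 (f : R -> R -> R) : Prop :=
  forall l : list bool,
    (forall t x, ex_derive (fun s => iter_partial l f s x) t /\
                 ex_derive (fun y => iter_partial l f t y) x) /\
    (forall t x, continuity_2d_pt (iter_partial l f) t x).

Definition mat (u f : R -> R -> R) : R -> R -> R :=
  fun t x => pt f t x + u t x * px f t x.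

(* With the material derivative f' = f_t + u f_x, mass conservation reads
   h' = - h u_x, so tau' = u_x / h, and every conservative pair satisfies
   (h f)_t + (h u f)_x = h f'.  Hence momentum conservation is h u' = - p_x with
   p = g h^2/2 - chi tau'', and for e = u^2/2 + g h/2 + chi tau'^2/2 the energy
   balance reduces to h e' + (p u)_x = 0, where
   h e' = u (h u') + (g h/2) h' + chi tau'' (h tau') = - u p_x - p u_x. *)

From Stdlib Require Import Reals FunctionalExtensionality Lra.
From Coquelicot Require Import Coquelicot.
Open Scope R_scope.

Definition partially_derivable (f : R -> R -> R) : Prop :=
  forall t x, ex_derive (fun s => f s x) t /\ ex_derive (fun y => f t y) x.

Lemma fun2_ext (F G : R -> R -> R) : (forall t x, F t x = G t x) -> F = G.
Proof.
  intros E; apply functional_extensionality; intros t.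
  apply functional_extensionality; intros x; apply E.
Qed.

Section PartialDerivativeRules.

Variables (f g : R -> R -> R) (t x : R).
Hypotheses (Hf : partially_derivable f) (Hg : partially_derivable g).

Lemma pt_const (c : R) : pt (fun _ _ => c) t x = 0.
Proof. unfold pt; exact (Derive_const c _). Qed.

Lemma px_const (c : R) : px (fun _ _ => c) t x = 0.
Proof. unfold px; exact (Derive_const c _). Qed.

Lemma pt_plus : pt (fun t x => f t x + g t x) t x = pt f t x + pt g t x.
Proof.
  unfold pt; rewrite Derive_plus;
    [reflexivity | exact (proj1 (Hf t x)) | exact (proj1 (Hg t x))].
Qed.

Lemma px_plus : px (fun t x => f t x + g t x) t x = px f t x + px g t x.
Proof.
  unfold px; rewrite Derive_plus;
    [reflexivity | exact (proj2 (Hf t x)) | exact (proj2 (Hg t x))].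
Qed.

Lemma pt_mult : pt (fun t x => f t x * g t x) t x = pt f t x * g t x + f t x * pt g t x.
Proof.
  unfold pt; rewrite Derive_mult;
    [reflexivity | exact (proj1 (Hf t x)) | exact (proj1 (Hg t x))].
Qed.

Lemma px_mult : px (fun t x => f t x * g t x) t x = px f t x * g t x + f t x * px g t x.
Proof.
  unfold px; rewrite Derive_mult;
    [reflexivity | exact (proj2 (Hf t x)) | exact (proj2 (Hg t x))].
Qed.

Lemma pt_pow (n : nat) :
  pt (fun t x => f t x ^ n) t x = INR n * pt f t x * f t x ^ pred n.
Proof.
  unfold pt; rewrite Derive_pow; [reflexivity | exact (proj1 (Hf t x))].
Qed.

Lemma px_pow (n : nat) :
  px (fun t x => f t x ^ n) t x = INR n * px f t x * f t x ^ pred n.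
Proof.
  unfold px; rewrite Derive_pow; [reflexivity | exact (proj2 (Hf t x))].
Qed.

Lemma pt_inv : f t x <> 0 -> pt (fun t x => / f t x) t x = - pt f t x / f t x ^ 2.
Proof.
  intros Hnz; unfold pt; rewrite Derive_inv;
    [reflexivity | exact (proj1 (Hf t x)) | exact Hnz].
Qed.

Lemma px_inv : f t x <> 0 -> px (fun t x => / f t x) t x = - px f t x / f t x ^ 2.
Proof.
  intros Hnz; unfold px; rewrite Derive_inv;
    [reflexivity | exact (proj2 (Hf t x)) | exact Hnz].
Qed.

End PartialDerivativeRules.

(* Unlike smooth2, this
   class is closed under pt and px without any continuity bookkeeping. *)
Inductive smooth_expr : (R -> R -> R) -> Prop :=
  | smooth_expr_partial f l : smooth2 f -> smooth_expr (iter_partial l f)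
  | smooth_expr_const c : smooth_expr (fun _ _ => c)
  | smooth_expr_plus f g :
      smooth_expr f -> smooth_expr g -> smooth_expr (fun t x => f t x + g t x)
  | smooth_expr_mult f g :
      smooth_expr f -> smooth_expr g -> smooth_expr (fun t x => f t x * g t x)
  | smooth_expr_inv f :
      smooth_expr f -> (forall t x, f t x <> 0) -> smooth_expr (fun t x => / f t x).

Lemma smooth_expr_ext (F G : R -> R -> R) :
  (forall t x, F t x = G t x) -> smooth_expr G -> smooth_expr F.
Proof. intros E HG; rewrite (fun2_ext F G E); exact HG. Qed.

Lemma smooth_expr_smooth2 f : smooth2 f -> smooth_expr f.
Proof. exact (smooth_expr_partial f nil). Qed.

Lemma smooth_expr_opp f : smooth_expr f -> smooth_expr (fun t x => - f t x).
Proof.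
  intros Hf; apply (smooth_expr_ext _ (fun t x => (-1) * f t x)).
  - intros t x; ring.
  - apply smooth_expr_mult; [apply smooth_expr_const | exact Hf].
Qed.

Lemma smooth_expr_minus f g :
  smooth_expr f -> smooth_expr g -> smooth_expr (fun t x => f t x - g t x).
Proof.
  intros Hf Hg; exact (smooth_expr_plus _ _ Hf (smooth_expr_opp g Hg)).
Qed.

Lemma smooth_expr_div f g :
  smooth_expr f -> smooth_expr g -> (forall t x, g t x <> 0) ->
  smooth_expr (fun t x => f t x / g t x).
Proof. intros; apply smooth_expr_mult, smooth_expr_inv; assumption. Qed.

Lemma smooth_expr_div_const f c : smooth_expr f -> smooth_expr (fun t x => f t x / c).
Proof.
  intros Hf; exact (smooth_expr_mult _ _ Hf (smooth_expr_const (/ c))).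
Qed.

Lemma smooth_expr_pow f n : smooth_expr f -> smooth_expr (fun t x => f t x ^ n).
Proof.
  intros Hf; induction n as [|n IH].
  - exact (smooth_expr_const 1).
  - apply (smooth_expr_mult f); assumption.
Qed.

Lemma smooth_expr_derivable f : smooth_expr f -> partially_derivable f.
Proof.
  induction 1 as [f l Hf|c|f g _ IHf _ IHg|f g _ IHf _ IHg|f _ IHf Hnz];
    intros t x.
  - exact (proj1 (Hf l) t x).
  - split; apply ex_derive_const.
  - destruct (IHf t x), (IHg t x); split; auto_derive; tauto.
  - destruct (IHf t x), (IHg t x); split; auto_derive; tauto.
  - destruct (IHf t x); split; auto_derive; auto.
Qed.

Lemma smooth_expr_pt_px f : smooth_expr f -> smooth_expr (pt f) /\ smooth_expr (px f).
Proof.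
  induction 1 as [f l Hf|c|f g Hf [IHft IHfx] Hg [IHgt IHgx]
                 |f g Hf [IHft IHfx] Hg [IHgt IHgx]|f Hf [IHft IHfx] Hnz].
  - exact (conj (smooth_expr_partial f (true :: l) Hf)
                (smooth_expr_partial f (false :: l) Hf)).
  - split; apply (smooth_expr_ext _ (fun _ _ => 0)).
    + intros t x; apply pt_const.
    + apply smooth_expr_const.
    + intros t x; apply px_const.
    + apply smooth_expr_const.
  - pose proof (smooth_expr_derivable f Hf) as Df.
    pose proof (smooth_expr_derivable g Hg) as Dg.
    split; eapply smooth_expr_ext.
    + intros t x; apply pt_plus; assumption.
    + apply smooth_expr_plus; assumption.
    + intros t x; apply px_plus; assumption.
    + apply smooth_expr_plus; assumption.
  - pose proof (smooth_expr_derivable f Hf) as Df.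
    pose proof (smooth_expr_derivable g Hg) as Dg.
    split; eapply smooth_expr_ext.
    + intros t x; apply pt_mult; assumption.
    + apply smooth_expr_plus; apply smooth_expr_mult; assumption.
    + intros t x; apply px_mult; assumption.
    + apply smooth_expr_plus; apply smooth_expr_mult; assumption.
  - pose proof (smooth_expr_derivable f Hf) as Df.
    split; eapply smooth_expr_ext.
    + intros t x; apply pt_inv; auto.
    + apply smooth_expr_div.
      * apply smooth_expr_opp, IHft.
      * apply smooth_expr_pow, Hf.
      * intros t x; apply pow_nonzero, Hnz.
    + intros t x; apply px_inv; auto.
    + apply smooth_expr_div.
      * apply smooth_expr_opp, IHfx.
      * apply smooth_expr_pow, Hf.
      * intros t x; apply pow_nonzero, Hnz.
Qed.

Lemma smooth_expr_mat u f : smooth_expr u -> smooth_expr f -> smooth_expr (mat u f).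
Proof.
  intros Hu Hf; destruct (smooth_expr_pt_px f Hf).
  apply smooth_expr_plus; [|apply smooth_expr_mult]; assumption.
Qed.

Ltac solve_smooth_expr :=
  solve [repeat first
    [ assumption
    | apply smooth_expr_const
    | apply smooth_expr_mat
    | apply smooth_expr_minus
    | apply smooth_expr_div_const
    | apply smooth_expr_div
    | apply smooth_expr_pow
    | apply smooth_expr_plus
    | apply smooth_expr_mult
    | apply smooth_expr_inv ]].

Ltac solve_derivable :=
  first [assumption | apply smooth_expr_derivable; solve_smooth_expr].

Section MaterialDerivativeRules.

Variables (u f g : R -> R -> R) (t x : R).
Hypotheses (Hf : partially_derivable f) (Hg : partially_derivable g).

Lemma mat_const (c : R) : mat u (fun _ _ => c) t x = 0.
Proof. unfold mat; rewrite pt_const, px_const; ring. Qed.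

Lemma mat_plus : mat u (fun t x => f t x + g t x) t x = mat u f t x + mat u g t x.
Proof. unfold mat; rewrite pt_plus, px_plus by assumption; ring. Qed.

Lemma mat_mult :
  mat u (fun t x => f t x * g t x) t x = mat u f t x * g t x + f t x * mat u g t x.
Proof. unfold mat; rewrite pt_mult, px_mult by assumption; ring. Qed.

Lemma mat_pow (n : nat) :
  mat u (fun t x => f t x ^ n) t x = INR n * mat u f t x * f t x ^ pred n.
Proof. unfold mat; rewrite pt_pow, px_pow by assumption; ring. Qed.

Lemma mat_inv : f t x <> 0 -> mat u (fun t x => / f t x) t x = - mat u f t x / f t x ^ 2.
Proof.
  intros Hnz; unfold mat; rewrite pt_inv, px_inv by assumption; field; auto.
Qed.

End MaterialDerivativeRules.

Lemma mat_scal u f c t x :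
  partially_derivable f -> mat u (fun t x => c * f t x) t x = c * mat u f t x.
Proof.
  intros Hf; rewrite mat_mult, mat_const; [ring | solve_derivable ..].
Qed.

Lemma mat_div_const u f c t x :
  partially_derivable f -> mat u (fun t x => f t x / c) t x = mat u f t x / c.
Proof.
  intros Hf; unfold Rdiv; rewrite mat_mult, mat_const; [ring | solve_derivable ..].
Qed.

Section BalanceLaws.

Variables h u : R -> R -> R.
Hypotheses (Sh : smooth_expr h) (Su : smooth_expr u) (Hnz : forall t x, h t x <> 0).
Hypothesis Hmass : forall t x, pt h t x + px (fun t x => h t x * u t x) t x = 0.

Lemma mat_density t x : mat u h t x = - h t x * px u t x.
Proof.
  pose proof (Hmass t x) as Ht; rewrite px_mult in Ht by solve_derivable.
  unfold mat; lra.
Qed.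

Lemma density_mat_specific_volume t x :
  h t x * mat u (fun t x => / h t x) t x = px u t x.
Proof.
  rewrite mat_inv, mat_density by solve_derivable || apply Hnz.
  field; apply Hnz.
Qed.

Lemma conservative_to_mat f t x :
  partially_derivable f ->
  pt (fun t x => h t x * f t x) t x + px (fun t x => h t x * u t x * f t x) t x
  = h t x * mat u f t x.
Proof.
  intros Hf; pose proof (Hmass t x) as Ht.
  rewrite pt_mult, (px_mult (fun t x => h t x * u t x)) by solve_derivable.
  transitivity (h t x * mat u f t x
                + f t x * (pt h t x + px (fun t x => h t x * u t x) t x)).
  - unfold mat; ring.
  - rewrite Ht; ring.
Qed.

Lemma momentum_mat p t x :
  partially_derivable p ->
  pt (fun t x => h t x * u t x) t x + px (fun t x => h t x * u t x ^ 2 + p t x) t x = 0 ->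
  h t x * mat u u t x = - px p t x.
Proof.
  intros Hp Hmom; rewrite px_plus in Hmom by solve_derivable.
  replace (fun t x => h t x * u t x ^ 2) with (fun t x => h t x * u t x * u t x) in Hmom
    by (apply fun2_ext; intros; ring).
  rewrite <- (conservative_to_mat u) by solve_derivable; lra.
Qed.

Lemma energy_flux_mat p e t x :
  smooth_expr p -> smooth_expr e ->
  pt (fun t x => h t x * e t x) t x
  + px (fun t x => h t x * u t x * e t x + p t x * u t x) t x
  = h t x * mat u e t x + px p t x * u t x + p t x * px u t x.
Proof.
  intros Sp Se.
  rewrite px_plus, (px_mult p u) by solve_derivable.
  rewrite <- (conservative_to_mat e) by solve_derivable; ring.
Qed.

Lemma mat_energy_density a b w t x :
  smooth_expr w ->
  mat u (fun t x => u t x ^ 2 / 2 + a * h t x / 2 + b * w t x ^ 2 / 2) t x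
  = u t x * mat u u t x + a / 2 * mat u h t x + b * w t x * mat u w t x.
Proof.
  intros Sw.
  rewrite !mat_plus, !mat_div_const, !mat_scal, !mat_pow by solve_derivable.
  simpl; field.
Qed.

End BalanceLaws.

Theorem mainTheorem4 (g chi : R) (h u : R -> R -> R) :
  0 < g -> 0 < chi ->
  smooth2 h -> smooth2 u ->
  (forall t x, 0 < h t x) ->
  (forall t x, pt h t x + px (fun t x => h t x * u t x) t x = 0) ->
  (forall t x,
     pt (fun t x => h t x * u t x) t x
     + px (fun t x => h t x * (u t x)^2 + g * (h t x)^2 / 2
                      - chi * mat u (mat u (fun t x => / h t x)) t x) t x = 0) ->
  forall t x,
    pt (fun t x =>
          h t x * ((u t x)^2 / 2 + g * h t x / 2
                   + chi * (mat u (fun t x => / h t x) t x)^2 / 2)) t x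
    + px (fun t x =>
          (h t x * u t x) * ((u t x)^2 / 2 + g * h t x / 2
                   + chi * (mat u (fun t x => / h t x) t x)^2 / 2)
          + (g * (h t x)^2 / 2 - chi * mat u (mat u (fun t x => / h t x)) t x)
            * u t x) t x = 0.
Proof.
  intros _ _ Sh Su Hpos Hmass Hmom t x.
  apply smooth_expr_smooth2 in Sh, Su.
  assert (Hnz : forall t x, h t x <> 0) by (intros; apply Rgt_not_eq, Hpos).
  pose (tau_dot := mat u (fun t x => / h t x)).
  pose (p := fun t x => g * h t x ^ 2 / 2 - chi * mat u tau_dot t x).
  pose (e := fun t x => u t x ^ 2 / 2 + g * h t x / 2 + chi * tau_dot t x ^ 2 / 2).
  assert (Stau_dot : smooth_expr tau_dot) by solve_smooth_expr.
  assert (Sp : smooth_expr p) by solve_smooth_expr.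
  assert (Se : smooth_expr e) by solve_smooth_expr.
  assert (Hvol : h t x * tau_dot t x = px u t x)
    by (apply density_mat_specific_volume; assumption).
  assert (Hmom_mat : h t x * mat u u t x = - px p t x).
  { apply momentum_mat; try solve [assumption | solve_derivable].
    replace (fun t x => h t x * u t x ^ 2 + p t x) with
      (fun t x => h t x * u t x ^ 2 + g * h t x ^ 2 / 2 - chi * mat u tau_dot t x)
      by (apply fun2_ext; intros; unfold p; ring).
    apply Hmom. }
  change (pt (fun t x => h t x * e t x) t x
          + px (fun t x => h t x * u t x * e t x + p t x * u t x) t x = 0).
  rewrite energy_flux_mat by assumption; unfold e.
  rewrite mat_energy_density, (mat_density h u) by assumption.
  transitivity (u t x * (h t x * mat u u t x + px p t x)
                + chi * mat u tau_dot t x * (h t x * tau_dot t x - px u t x)).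
  - unfold p; field.
  - rewrite Hmom_mat, Hvol; ring.
Qed.
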